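(* Let $X$ be a regular topological space. Then $X$ is an Alster space if and only if $X$ is totally Lindelöf.
   Context: A filter base on a set $X$ is a nonempty family $\mathcal{F}\subseteq\mathcal{P}(X)$ such that $\emptyset\notin\mathcal{F}$ and $F_0\cap F_1\in\mathcal{F}$ for all $F_0,F_1\in\mathcal{F}$. A filter base $\mathcal{H}$ extends $\mathcal{F}$ if $\mathcal{F}\subseteq\mathcal{H}$. A filter base $\mathcal{F}$ is stable under countable intersections if for every countable $S\subseteq\mathcal{F}$ there is $H\in\mathcal{F}$ with $H\subseteq\bigcap S$. For $\mathcal{F}\subseteq\mathcal{P}(X)$, $X$ a topological space, $ad(\mathcal{F})=\bigcap\{\overline{F}: F\in\mathcal{F}\}$ (closures in $X$). A filter base $\mathcal{F}$ on $X$ is total if every filter base $\mathcal{H}\supseteq\mathcal{F}$ on $X$ satisfies $ad(\mathcal{H})\neq\emptyset$. $X$ is totally Lindelöf if every filter base on $X$ that is stable under countable intersections is extended by some total filter base on $X$ that is stable under countable intersections. A $G_\delta$ set of $X$ is a countable intersection of open subsets of $X$. An Alster covering of $X$ is a family $\mathcal{G}$ of $G_\delta$ subsets of $X$ such that every compact $K\subseteq X$ is contained in some $G\in\mathcal{G}$. $X$ is an Alster space if every Alster covering of $X$ has a countable subfamily whose union is $X$. *)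

From HB Require Import structures.
From mathcomp Require Import all_boot all_order all_algebra.
From mathcomp Require Import all_classical all_reals all_analysis.
Set Implicit Arguments. Unset Strict Implicit. Unset Printing Implicit Defensive.
Local Open Scope classical_set_scope.

Definition filter_base (T : Type) (F : set (set T)) : Prop :=
  F !=set0 /\ ~ F set0 /\ (forall F0 F1, F F0 -> F F1 -> F (F0 `&` F1)).

Definition extends (T : Type) (F H : set (set T)) : Prop := F `<=` H.

Definition stable_countable_inter (T : Type) (F : set (set T)) : Prop :=
  forall S : set (set T), countable S -> S `<=` F ->
    exists2 H, F H & H `<=` \bigcap_(A in S) A.

Definition ad (T : topologicalType) (F : set (set T)) : set T :=
  \bigcap_(A in F) closure A.

Definition total (T : topologicalType) (F : set (set T)) : Prop :=
  forall H : set (set T), filter_base H -> extends F H -> ad H !=set0.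

Definition totally_Lindelof (T : topologicalType) : Prop :=
  forall F : set (set T), filter_base F -> stable_countable_inter F ->
    exists H : set (set T),
      [/\ filter_base H, extends F H, total H & stable_countable_inter H].

Definition G_delta (T : topologicalType) (G : set T) : Prop :=
  exists U : nat -> set T, (forall n, open (U n)) /\ G = \bigcap_n U n.

Definition Alster_covering (T : topologicalType) (G : set (set T)) : Prop :=
  (forall A, G A -> G_delta A) /\
  (forall K : set T, compact K -> exists2 A, G A & K `<=` A).

Definition Alster_space (T : topologicalType) : Prop :=
  forall G : set (set T), Alster_covering G ->
    exists2 C : set (set T), C `<=` G /\ countable C & \bigcup_(A in C) A = setT.

From Pilot Require Import Defs.
From mathcomp Require Import all_boot all_order all_algebra.
From mathcomp Require Import all_classical all_reals all_analysis.
Set Implicit Arguments. Unset Strict Implicit. Unset Printing Implicit Defensive.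
Local Open Scope classical_set_scope.

(* The common tool is the refinement [refinement H O] of a filter base H by
   a family O closed under finite intersections: the sets B `&` P with B in H
   and P in O.  It is a filter base extending H as soon as its members are
   nonempty, and it inherits stability under countable intersections.

   (Totally Lindelöf => Alster.)  If an Alster covering G had no countable
   subcover, the complements of its countable subunions would form a filter
   base stable under countable intersections.  Extend it to a total stable H.
   Totality makes ad(H) compact (this uses regularity) and forces every open
   set containing ad(H) to contain a member of H; by stability the same holds
   for the G_delta member of G containing ad(H), which contradicts the fact
   that its complement lies in H.

   (Alster => totally Lindelöf.)  Given a stable filter base F, the Alster
   property yields a compact K all of whose G_delta neighbourhoods meet every
   member of F (otherwise the G_delta sets missing a member of F would be an
   Alster covering, and a countable subcover would contradict stability).
   Refining F by the G_delta sets containing K gives the required extension;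
   it is total by compactness of K. *)

Lemma choice_on (X Y : Type) (D : set X) (P : X -> Y -> Prop) (y0 : Y) :
  (forall x, D x -> exists y, P x y) -> exists f : X -> Y, forall x, D x -> P x (f x).
Proof.
move=> hP; have /choice[f hf] : forall x, exists y, D x -> P x y.
  by move=> x; case: (pselect (D x)) => [/hP[y]|nDx]; [exists y | exists y0].
by exists f.
Qed.

Lemma countable_image (U V : Type) (f : U -> V) (A : set U) :
  countable A -> countable (f @` A).
Proof. exact/card_le_trans/card_image_le. Qed.

Lemma countableU (U : Type) (A B : set U) :
  countable A -> countable B -> countable (A `|` B).
Proof.
move=> cA cB.
have -> : A `|` B = \bigcup_(b in [set: bool]) (if b then A else B).
  apply/seteqP; split=> [x [Ax|Bx]|x [[]]] //;
    by [exists true | exists false | left | right].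
by apply: bigcup_countable => // -[].
Qed.

Section GDelta.
Variable T : topologicalType.

Lemma G_delta_open (U : set T) : open U -> G_delta U.
Proof.
move=> oU; exists (fun=> U); split=> //.
by apply/seteqP; split=> [x Ux n _ //|x /(_ 0%N Logic.I)].
Qed.

Lemma G_deltaI (G1 G2 : set T) : G_delta G1 -> G_delta G2 -> G_delta (G1 `&` G2).
Proof.
move=> [U1 [oU1 ->]] [U2 [oU2 ->]]; exists (fun n => U1 n `&` U2 n); split.
  by move=> n; exact: openI.
apply/seteqP; split=> [x [h1 h2] n _|x h]; first by split; [exact: h1 | exact: h2].
by split=> n _; have [] := h n Logic.I.
Qed.

Lemma G_delta_countable_open (W : set (set T)) :
  countable W -> (forall U, W U -> open U) -> G_delta (\bigcap_(U in W) U).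
Proof.
move=> cW oW; have [g gW] := pcard_surjP cW.
exists (fun n => if pselect (W (g n)) is left _ then g n else setT); split.
  by move=> n; case: pselect => [/oW//|_]; exact: openT.
apply/seteqP; split=> [x Wx n _|x Hx U WU]; first by case: pselect => // /Wx.
have [n _ gnU] := gW U WU.
by move: (Hx n Logic.I); case: pselect => [_|]; rewrite gnU.
Qed.

Lemma G_delta_bigcap (S : set (set T)) :
  countable S -> S `<=` @G_delta T -> G_delta (\bigcap_(G in S) G).
Proof.
move=> cS SG; have [U hU] := choice_on (fun=> setT) SG.
have -> : \bigcap_(G in S) G = \bigcap_(V in \bigcup_(G in S) range (U G)) V.
  apply/seteqP; split=> [x hx V [G SG' [n _ <-]]|x hx G SG'].
    by move: (hx G SG'); rewrite {1}(hU G SG').2 => /(_ n Logic.I).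
  by rewrite (hU G SG').2 => n _; apply: hx; exists G => //; exists n.
apply: G_delta_countable_open.
  by apply: bigcup_countable => // G _; exact: countable_image.
by move=> V [G SG' [n _ <-]]; exact: (hU G SG').1.
Qed.

End GDelta.

Section Refinement.
Variable T : Type.

Lemma filter_base_member_nonempty (H : set (set T)) B :
  filter_base H -> H B -> B !=set0.
Proof. by move=> [_ [H0 _]] HB; apply/set0P/eqP => e; apply: H0; rewrite -e. Qed.

Definition refinement (H O : set (set T)) : set (set T) :=
  [set E | exists B P, [/\ H B, O P & E = B `&` P]].

Lemma refinement_extends (H O : set (set T)) : O setT -> extends H (refinement H O).
Proof. by move=> OT B HB; exists B, setT; rewrite setIT. Qed.

Lemma refinement_filter_base (H O : set (set T)) : filter_base H -> O setT ->
  (forall P Q, O P -> O Q -> O (P `&` Q)) ->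
  (forall B P, H B -> O P -> B `&` P !=set0) -> filter_base (refinement H O).
Proof.
move=> [[B0 HB0] [_ HI]] OT OI meet; split; first by exists B0; exact: refinement_extends.
split; first by move=> [B [P [HB OP e]]]; have [x] := meet B P HB OP; rewrite -e.
move=> _ _ [B1 [P1 [HB1 OP1 ->]]] [B2 [P2 [HB2 OP2 ->]]].
by exists (B1 `&` B2), (P1 `&` P2); rewrite setIACA; split; [exact: HI|exact: OI|].
Qed.

Lemma refinement_stable (H O : set (set T)) : stable_countable_inter H ->
  (forall S, countable S -> S `<=` O -> O (\bigcap_(P in S) P)) ->
  stable_countable_inter (refinement H O).
Proof.
move=> sH OC S cS SR.
have pairs E : S E -> exists p : set T * set T, [/\ H p.1, O p.2 & E = p.1 `&` p.2].
  by move=> /SR[B [P h]]; exists (B, P).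
have [f hf] := choice_on (setT, setT) pairs.
have fstH : (fst \o f) @` S `<=` H by move=> _ [E SE <-]; case: (hf E SE).
have [B HB sB] := sH _ (countable_image _ cS) fstH.
exists (B `&` \bigcap_(P in (snd \o f) @` S) P).
  exists B, (\bigcap_(P in (snd \o f) @` S) P); split => //.
  by apply: OC; [exact: countable_image | move=> _ [E SE <-]; case: (hf E SE)].
move=> x [Bx Px] E SE; case: (hf E SE) => _ _ ->; split.
  by apply: (sB x Bx); exists E.
by apply: Px; exists E.
Qed.

End Refinement.

Section Adherence.
Variable T : topologicalType.
Implicit Types H : set (set T).

Lemma ad_antitone H H' : extends H H' -> ad H' `<=` ad H.
Proof. by move=> s x hx A HA; exact: hx A (s A HA). Qed.

(* A total filter base has a member inside every open set containing its
   adherence: otherwise refining it by the complement of that open set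
   gives an extension whose adherence misses ad(H). *)
Lemma total_open_member H (U : set T) : filter_base H -> Defs.total H ->
  open U -> ad H `<=` U -> exists2 B, H B & B `<=` U.
Proof.
move=> fH tH oU adU; apply: contrapT => nB.
pose O := fun P : set T => P = setT \/ P = ~` U.
have OI P Q : O P -> O Q -> O (P `&` Q).
  by case=> ->; case=> ->; rewrite ?setIT ?setTI ?setIid; [left|right|right|right].
have meet B P : H B -> O P -> B `&` P !=set0.
  move=> HB [->|->]; first by rewrite setIT; exact: filter_base_member_nonempty HB.
  apply/set0P/eqP => e; apply: nB; exists B => // x Bx; apply: contrapT => nUx.
  by have : (B `&` ~` U) x by []; rewrite e.
have fR := refinement_filter_base fH (or_introl erefl) OI meet.
have eR : extends H (refinement H O) by apply: refinement_extends; left.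
have [x adx] := tH _ fR eR; have Ux := adU _ (ad_antitone eR adx).
have [B0 HB0] := fH.1.
have /adx : refinement H O (B0 `&` ~` U) by exists B0, (~` U); split => //; right.
have clU : ~` U = closure (~` U) by apply/closure_id; exact: open_closedC.
by move=> /(closureS (@subIsetr _ B0 (~` U))); rewrite -clU => /(_ Ux).
Qed.

(* In a regular space the adherence of a total filter base is compact: a
   proper filter on ad(H) without cluster point in ad(H) would let us refinement H
   by the open sets that are eventually large, and regularity separates the
   resulting adherent point from the filter. *)
Lemma total_compact_ad H : regular_space T -> filter_base H -> Defs.total H ->
  compact (ad H).
Proof.
move=> reg fH tH L PL LK; apply: contrapT => nK.
pose O := [set P : set T | open P /\ exists2 L', L L' & L' `<=` P].
have OT : O setT by split; [exact: openT | exists setT => //; exact: filterT].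
have OI P Q : O P -> O Q -> O (P `&` Q).
  move=> [oP [L1 LL1 s1]] [oQ [L2 LL2 s2]]; split; first exact: openI.
  by exists (L1 `&` L2); [exact: filterI | move=> x [/s1 ? /s2 ?]].
have meet B P : H B -> O P -> B `&` P !=set0.
  move=> HB [oP [L1 LL1 s1]]; have [y [L1y Ky]] := filter_ex (filterI LL1 LK).
  exact: Ky B HB P (open_nbhs_nbhs (conj oP (s1 y L1y))).
have eR : extends H (refinement H O) by exact: refinement_extends.
have [z adz] := tH _ (refinement_filter_base fH OT OI meet) eR.
apply: nK; exists z; split; first exact: (ad_antitone eR).
move=> L1 N LL1 Nz; apply: contrapT => hne.
have [N' N'z cN'] := reg z N Nz.
have OP : O (~` closure N').
  split; first exact/closed_openC/closed_closure.
  by exists L1 => // x L1x cx; apply: hne; exists x; split => //; exact: cN'.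
have [B0 HB0] := fH.1.
have /adz /(_ N' N'z) [y [[_ ncy] N'y]] : refinement H O (B0 `&` ~` closure N').
  by exists B0, (~` closure N').
by apply: ncy; exact: subset_closure.
Qed.

Lemma total_stable_G_delta_member H (G : set T) : filter_base H -> Defs.total H ->
  stable_countable_inter H -> G_delta G -> ad H `<=` G -> exists2 B, H B & B `<=` G.
Proof.
move=> fH tH sH [U [oU ->]] adG.
have memU n : exists B, H B /\ B `<=` U n.
  have [B HB BU] := total_open_member fH tH (oU n) (fun x hx => adG x hx n Logic.I).
  by exists B.
have [Bn hBn] := choice memU.
have BnH : range Bn `<=` H by move=> _ [n _ <-]; case: (hBn n).
have [B HB sB] := sH _ (countable_image _ (countableP _)) BnH.
exists B => // x Bx n _; apply: (proj2 (hBn n)).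
by apply: (sB x Bx); exists n.
Qed.

Lemma compact_meets_ad H (K : set T) : compact K -> filter_base H ->
  (forall B, H B -> K `&` closure B !=set0) -> ad H `&` K !=set0.
Proof.
move=> cK [[B0 HB0] [_ HI]] KB.
pose L := filter_from H (fun B => K `&` closure B).
have FL : Filter L.
  apply: filter_from_filter; first by exists B0.
  move=> B1 B2 HB1 HB2; exists (B1 `&` B2); first exact: HI.
  move=> x [Kx cx]; split; split => //.
    exact: (closureS (@subIsetl _ B1 B2)).
  exact: (closureS (@subIsetr _ B1 B2)).
have PL : ProperFilter L by apply: filter_from_proper.
have LK : L K by exists B0 => // x [].
have [x [Kx clx]] := cK L PL LK.
exists x; split=> // B HB.
rewrite (_ : closure B = closure (closure B)); last exact/closure_id/closed_closure.
move=> N Nx; have [y [[_ cy] Ny]] := clx _ N (ex_intro2 _ _ B HB (fun=> id)) Nx.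
by exists y.
Qed.

End Adherence.

Section TotallyLindelofAlster.
Variable T : topologicalType.

Definition countable_complements (G : set (set T)) : set (set T) :=
  [set A | exists C : set (set T),
     [/\ C `<=` G, countable C & A = ~` \bigcup_(D in C) D]].

Lemma countable_complements_filter_base (G : set (set T)) :
  ~ (exists2 C : set (set T), C `<=` G /\ countable C & \bigcup_(A in C) A = setT) ->
  filter_base (countable_complements G).
Proof.
move=> nC; split; first by exists setT, set0; split => //; rewrite bigcup_set0 setC0.
split.
  move=> [C [CG cC e]]; apply: nC; exists C => //.
  by rewrite -[LHS]setCK -e setC0.
move=> _ _ [C1 [C1G cC1 ->]] [C2 [C2G cC2 ->]]; exists (C1 `|` C2); split.
- by move=> D [/C1G|/C2G].
- exact: countableU.
- by rewrite bigcup_setU setCU.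
Qed.

(* A countable union of countable subfamilies is a countable subfamily. *)
Lemma countable_complements_stable (G : set (set T)) :
  stable_countable_inter (countable_complements G).
Proof.
move=> S cS SF; have [f hf] := choice_on set0 SF.
exists (~` \bigcup_(D in \bigcup_(A in S) f A) D).
  exists (\bigcup_(A in S) f A); split => //.
  - by move=> D [A SA]; case: (hf A SA) => CG _ _; exact: CG.
  - by apply: bigcup_countable => // A SA; case: (hf A SA).
move=> x nx A SA; case: (hf A SA) => _ _ -> [D fD Dx]; apply: nx.
by exists D => //; exists A.
Qed.

Lemma totally_Lindelof_Alster : regular_space T -> totally_Lindelof T -> Alster_space T.
Proof.
move=> reg TL G [GG GK]; apply: contrapT => nC.
have [H [fH eH tH sH]] :=
  TL _ (countable_complements_filter_base nC) (@countable_complements_stable G).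
have [Gd GdG adGd] := GK _ (total_compact_ad reg fH tH).
have [B HB BGd] := total_stable_G_delta_member fH tH sH (GG _ GdG) adGd.
have HC : H (~` Gd) by apply: eH; exists [set Gd]; rewrite bigcup_set1; split => // _ ->.
have [x [Bx nGdx]] := filter_base_member_nonempty fH (fH.2.2 _ _ HB HC).
exact/nGdx/BGd.
Qed.

End TotallyLindelofAlster.

Section AlsterTotallyLindelof.
Variable T : topologicalType.

Definition G_delta_over (K : set T) : set (set T) := [set G | G_delta G /\ K `<=` G].

Lemma G_delta_over_setT (K : set T) : G_delta_over K setT.
Proof. by split=> //; exact/G_delta_open/openT. Qed.

Lemma G_delta_overI (K : set T) P Q :
  G_delta_over K P -> G_delta_over K Q -> G_delta_over K (P `&` Q).
Proof.
by move=> [GP KP] [GQ KQ]; split; [exact: G_deltaI | move=> x Kx; split; auto].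
Qed.

Lemma G_delta_over_bigcap (K : set T) S : countable S -> S `<=` G_delta_over K ->
  G_delta_over K (\bigcap_(P in S) P).
Proof.
move=> cS SK; split; first by apply: G_delta_bigcap => // P /SK[].
by move=> x Kx P /SK[_]; exact.
Qed.

Lemma Alster_core (F : set (set T)) : Alster_space T -> filter_base F ->
  stable_countable_inter F -> exists2 K, compact K &
    forall G A, G_delta_over K G -> F A -> G `&` A !=set0.
Proof.
move=> Al fF sF; apply: contrapT => nK.
have [A0 FA0] := fF.1.
pose GG := [set G | exists A, [/\ G_delta G, F A & G `&` A = set0]].
have covG : Alster_covering GG.
  split; first by move=> G [A []].
  move=> K cK; have /forall2NP/(_ K)[//|/existsNP[G /existsNP[A]]] := nK.
  move=> /not_implyP[[GdG KG] /not_implyP[FA /set0P/negP/negbNE/eqP GA]].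
  by exists G => //; exists A.
have [C [CG cC] covC] := Al GG covG.
have missing G : C G -> exists A, F A /\ G `&` A = set0.
  by move=> /CG[A [_ FA GA]]; exists A.
have [f hf] := choice_on A0 missing.
have fCF : f @` C `<=` F by move=> _ [G CG' <-]; exact: (hf G CG').1.
have [A' FA' sA'] := sF _ (countable_image _ cC) fCF.
have [a A'a] := filter_base_member_nonempty fF FA'.
have [G CG' Ga] : (\bigcup_(A in C) A) a by rewrite covC.
have : (G `&` f G) a by split => //; apply: (sA' a A'a); exists G.
by rewrite (hf G CG').2.
Qed.

(* Totality of the refinement of F by the G_delta sets over such a compact K:
   in any extension every closure meets K, since otherwise the complement of
   that closure is a G_delta set over K. *)
Lemma refinement_G_delta_over_total (F : set (set T)) (K : set T) :
  filter_base F -> compact K -> Defs.total (refinement F (G_delta_over K)).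
Proof.
move=> fF cK H' fH' eH'; have [A0 FA0] := fF.1.
suff KB B : H' B -> K `&` closure B !=set0.
  by have [x [adx _]] := compact_meets_ad cK fH' KB; exists x.
move=> HB; apply: contrapT => nK.
have OB : G_delta_over K (~` closure B).
  split; first exact/G_delta_open/closed_openC/closed_closure.
  by move=> x Kx cx; apply: nK; exists x.
have HU : H' (A0 `&` ~` closure B) by apply: eH'; exists A0, (~` closure B).
have [y [By [_ ncy]]] := filter_base_member_nonempty fH' (fH'.2.2 _ _ HB HU).
exact/ncy/subset_closure.
Qed.

Lemma Alster_totally_Lindelof : Alster_space T -> totally_Lindelof T.
Proof.
move=> Al F fF sF; have [K cK meetK] := Alster_core Al fF sF.
exists (refinement F (G_delta_over K)); split.
- apply: refinement_filter_base => //; first exact: G_delta_over_setT.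
    exact: G_delta_overI.
  by move=> B P FB OP; rewrite setIC; exact: meetK.
- exact/refinement_extends/G_delta_over_setT.
- exact: refinement_G_delta_over_total.
- exact/refinement_stable/G_delta_over_bigcap.
Qed.

End AlsterTotallyLindelof.

Theorem theorem1 (T : topologicalType) :
  @regular_space T -> (Alster_space T <-> totally_Lindelof T).
Proof.
move=> reg; split; [exact: Alster_totally_Lindelof | exact: totally_Lindelof_Alster].
Qed.
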